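(* Let $\nu>-1$ be real and let $0<j_1<j_2<\cdots$ be the positive zeros of $J_\nu(\cdot;q^2)$. Then for all $n,m\ge1$, $$\int_0^1 x\,J_\nu(qj_nx;q^2)J_\nu(qj_mx;q^2)\,d_qx=-\tfrac12(1-q)q^{\nu-1}J_{\nu+1}(qj_n;q^2)J_\nu'(j_n;q^2)\,\delta_{n,m},$$ and moreover $$-\tfrac12(1-q)q^{\nu-1}J_{\nu+1}(qj_n;q^2)J_\nu'(j_n;q^2)=\tfrac12(1-q)^2q^{\nu-2}\big(D_qJ_\nu(\cdot;q^2)\big)(j_n)\,J_\nu'(j_n;q^2)=-\tfrac12(1-q)q^{\nu-2}j_n^{-1}J_\nu(qj_n;q^2)J_\nu'(j_n;q^2)=-\tfrac12(1-q)q^{-2}J_{\nu+1}(j_n;q^2)J_\nu'(j_n;q^2).$$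
   Context: Fix $0<q<1$. For $a\in\mathbb C$ put $(a;q)_0=1$, $(a;q)_k=\prod_{i=0}^{k-1}(1-aq^i)$, $(a;q)_\infty=\prod_{i\ge0}(1-aq^i)$. For $\nu\in\mathbb C$ and $x\in\mathbb C\setminus\{0\}$ the Hahn–Exton $q$-Bessel function is $$J_\nu(x;q^2)=\frac{x^\nu}{(q^2;q^2)_\infty}\sum_{k=0}^\infty\frac{(-1)^kq^{k(k+1)}(q^{2\nu+2k+2};q^2)_\infty}{(q^2;q^2)_k}\,x^{2k},$$ with $x^\nu=\exp(\nu\operatorname{Log}x)$ (principal branch). $J_\nu'$ is the ordinary derivative in $x$. The $q$-derivative is $(D_qf)(x)=\frac{f(x)-f(qx)}{(1-q)x}$ for $x\ne0$, and the $q$-integral is $\int_0^z f(x)\,d_qx=(1-q)z\sum_{k\ge0}f(zq^k)q^k$. $\delta_{n,m}$ is the Kronecker delta. *)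

From Stdlib Require Import Reals.
From Coquelicot Require Import Coquelicot.
Open Scope R_scope.

Fixpoint qpoch (a q : R) (k : nat) : R :=
  match k with
  | O => 1
  | S k' => qpoch a q k' * (1 - a * q ^ k')
  end.

Definition qpoch_inf (a q : R) : R :=
  real (Lim_seq (fun N => qpoch a q N)).

(* Hahn--Exton q-Bessel function J_nu(x;q^2), for real x > 0
   (x^nu = exp(nu ln x), the principal branch on the positive axis). *)
Definition qJ (q nu x : R) : R :=
  Rpower x nu / qpoch_inf (q ^ 2) (q ^ 2) *
  Series (fun k => (-1) ^ k * q ^ (k * (k + 1)) *
                   qpoch_inf (Rpower q (2 * nu + 2 * INR k + 2)) (q ^ 2)
                   / qpoch (q ^ 2) (q ^ 2) k * x ^ (2 * k)).

Definition Dq (q : R) (f : R -> R) (x : R) : R :=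
  (f x - f (q * x)) / ((1 - q) * x).

(* is_qint q f z v  :<->  int_0^z f(x) d_qx = v, i.e. the series
   (1-q) z sum_k f(z q^k) q^k converges to v. *)
Definition is_qint (q : R) (f : R -> R) (z v : R) : Prop :=
  is_series (fun k => (1 - q) * z * (f (z * q ^ k) * q ^ k)) v.

Definition kdelta (n m : nat) : R := if Nat.eqb n m then 1 else 0.

From Stdlib Require Import Reals Lra Lia.
From Coquelicot Require Import Coquelicot.
Open Scope R_scope.

(* Write [J_nu(x) = x^nu G(x^2) / (q^2;q^2)_oo] with [G] an entire power series.
   The contiguous relations of the coefficients give a second-order q-difference
   equation for [G]; for two solutions [G(a^2 .)] and [G(b^2 .)] this yields a
   q-Green identity: [(b^2 - a^2)] times the partial sums of the q-integral equals
   the difference of two weighted Casorati determinants, the first one vanishing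
   when [a] and [b] are zeros and the last one tending to 0 since [nu > -1].
   For [a = b] one differentiates the identity in [a^2] at [a^2 = b^2]. *)

Lemma pow_in_01 b N : 0 <= b <= 1 -> 0 <= b ^ N <= 1.
Proof.
  intros Hb; induction N as [|N IH]; simpl; [lra|].
  split; [apply Rmult_le_pos|]; nra.
Qed.

Lemma real_Lim_seq_between (u : nat -> R) lo hi :
  (forall n, lo <= u n <= hi) -> lo <= real (Lim_seq u) <= hi.
Proof.
  intros Hu.
  assert (Hlo : Rbar_le (Lim_seq (fun _ => lo)) (Lim_seq u))
    by (apply Lim_seq_le_loc; exists O; intros; apply Hu).
  assert (Hhi : Rbar_le (Lim_seq u) (Lim_seq (fun _ => hi)))
    by (apply Lim_seq_le_loc; exists O; intros; apply Hu).
  rewrite Lim_seq_const in Hlo, Hhi.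
  destruct (Lim_seq u); simpl in *; tauto.
Qed.

Lemma real_Rbar_mult c L : real (Rbar_mult (Finite c) L) = c * real L.
Proof.
  destruct L; simpl; try ring; unfold Rbar_mult, Rbar_mult'; simpl;
    repeat destruct Rle_dec; repeat destruct Rle_lt_or_eq_dec; simpl; ring.
Qed.

Lemma qpoch_succ_shift a b N : qpoch a b (S N) = (1 - a) * qpoch (a * b) b N.
Proof.
  induction N as [|N IH]; [simpl; ring|].
  change (qpoch a b (S (S N))) with (qpoch a b (S N) * (1 - a * b ^ S N)).
  rewrite IH; simpl; ring.
Qed.

Lemma qpoch_inf_shift a b : qpoch_inf a b = (1 - a) * qpoch_inf (a * b) b.
Proof.
  unfold qpoch_inf; rewrite <- Lim_seq_incr_1.
  rewrite (Lim_seq_ext _ (fun n => (1 - a) * qpoch (a * b) b n))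
    by (intros; apply qpoch_succ_shift).
  rewrite Lim_seq_scal_l; apply real_Rbar_mult.
Qed.

Lemma qpoch_in_01 a b N : 0 <= a <= 1 -> 0 <= b <= 1 -> 0 <= qpoch a b N <= 1.
Proof.
  intros Ha Hb; induction N as [|N IH]; simpl; [lra|].
  pose proof (pow_in_01 b N Hb).
  assert (0 <= a * b ^ N <= 1) by nra.
  nra.
Qed.

Lemma qpoch_inf_in_01 a b : 0 <= a <= 1 -> 0 <= b <= 1 -> 0 <= qpoch_inf a b <= 1.
Proof. intros; apply real_Lim_seq_between; intros; apply qpoch_in_01; auto. Qed.

Lemma pow_le_qpoch Q k : 0 < Q < 1 -> (1 - Q) ^ k <= qpoch Q Q k.
Proof.
  intros HQ; induction k as [|k IH]; simpl; [lra|].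
  pose proof (pow_in_01 Q k ltac:(lra)).
  assert (0 < (1 - Q) ^ k) by (apply pow_lt; lra).
  rewrite (Rmult_comm (1 - Q)); apply Rmult_le_compat; nra.
Qed.

Lemma qpoch_pos Q k : 0 < Q < 1 -> 0 < qpoch Q Q k.
Proof.
  intros; eapply Rlt_le_trans; [|apply pow_le_qpoch; auto]; apply pow_lt; lra.
Qed.

(* From [exp t >= 1 + t] with [t = x / (1 - Q)], using [x <= Q]. *)
Lemma exp_le_one_minus x Q : 0 <= x <= Q -> Q < 1 -> exp (- (x / (1 - Q))) <= 1 - x.
Proof.
  intros Hx HQ.
  pose proof (exp_ineq1_le (x / (1 - Q))) as Hexp.
  assert (Hpos : 0 < exp (x / (1 - Q))) by apply exp_pos.
  rewrite exp_Ropp.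
  assert (Hprod : 1 <= (1 - x) * (1 + x / (1 - Q))).
  { replace ((1 - x) * (1 + x / (1 - Q))) with (1 + x * (Q - x) / (1 - Q)) by (field; lra).
    assert (0 <= x * (Q - x) / (1 - Q)) by (apply Rmult_le_pos; [nra | left; apply Rinv_0_lt_compat; lra]).
    lra. }
  apply (Rmult_le_reg_r (exp (x / (1 - Q)))); auto.
  rewrite Rinv_l by lra; nra.
Qed.

Lemma exp_le_qpoch Q N : 0 < Q < 1 ->
  exp (- (Q * (1 - Q ^ N) / (1 - Q) ^ 2)) <= qpoch Q Q N.
Proof.
  intros HQ; induction N as [|N IH]; simpl qpoch.
  - replace (- (Q * (1 - Q ^ 0) / (1 - Q) ^ 2)) with 0 by (simpl; field; lra).
    rewrite exp_0; lra.
  - replace (- (Q * (1 - Q ^ S N) / (1 - Q) ^ 2))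
      with (- (Q * (1 - Q ^ N) / (1 - Q) ^ 2) + - (Q * Q ^ N / (1 - Q)))
      by (simpl; field; lra).
    rewrite exp_plus.
    pose proof (pow_in_01 Q N ltac:(lra)).
    apply Rmult_le_compat; try (left; apply exp_pos); auto.
    apply exp_le_one_minus; nra.
Qed.

Lemma qpoch_inf_pos Q : 0 < Q < 1 -> 0 < qpoch_inf Q Q.
Proof.
  intros HQ.
  assert (Hlo : forall N, exp (- (Q / (1 - Q) ^ 2)) <= qpoch Q Q N <= 1).
  { intros N; split; [|apply qpoch_in_01; lra].
    eapply Rle_trans; [|apply exp_le_qpoch; auto].
    left; apply exp_increasing.
    pose proof (pow_in_01 Q N ltac:(lra)).
    assert (0 < (1 - Q) ^ 2) by (apply pow_lt; lra).
    apply Ropp_lt_contravar; unfold Rdiv; apply Rmult_lt_compat_r.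
    - apply Rinv_0_lt_compat; auto.
    - destruct (Req_dec (Q ^ N) 0) as [E|E]; [|nra].
      exfalso; apply (pow_nonzero Q N); lra; auto. }
  eapply Rlt_le_trans; [apply exp_pos|].
  apply (real_Lim_seq_between _ _ _ Hlo).
Qed.

Lemma Rpower_in_01 q e : 0 < q < 1 -> 0 < e -> 0 < Rpower q e < 1.
Proof.
  intros Hq He; unfold Rpower; split; [apply exp_pos|].
  rewrite <- exp_0; apply exp_increasing.
  assert (ln q < 0) by (rewrite <- ln_1; apply ln_increasing; lra).
  nra.
Qed.

Lemma sqr_in_01 q : 0 < q < 1 -> 0 < q ^ 2 < 1.
Proof. intros; simpl; nra. Qed.

Definition qJ_coef (q mu : R) (k : nat) : R :=
  (-1) ^ k * q ^ (k * (k + 1)) * qpoch_inf (Rpower q (2 * mu + 2 * INR k + 2)) (q ^ 2)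
  / qpoch (q ^ 2) (q ^ 2) k.

Definition qJ_ps (q mu y : R) : R := PSeries (qJ_coef q mu) y.

Definition qJ_ps_der (q mu y : R) : R := PSeries (PS_derive (qJ_coef q mu)) y.

Lemma qJ_ps_spec q mu x :
  qJ q mu x = Rpower x mu / qpoch_inf (q ^ 2) (q ^ 2) * qJ_ps q mu (x ^ 2).
Proof.
  unfold qJ, qJ_ps, PSeries; f_equal; apply Series_ext; intros k.
  rewrite (pow_mult x 2 k); reflexivity.
Qed.

Lemma Rabs_qJ_coef_le q mu k : 0 < q < 1 -> -1 < mu ->
  Rabs (qJ_coef q mu k) <= q ^ (k * (k + 1)) / (1 - q ^ 2) ^ k.
Proof.
  intros Hq Hmu; pose proof (sqr_in_01 q Hq) as HQ.
  pose proof (qpoch_pos (q ^ 2) k HQ) as Hpoch.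
  assert (Hinf : 0 <= qpoch_inf (Rpower q (2 * mu + 2 * INR k + 2)) (q ^ 2) <= 1).
  { pose proof (pos_INR k).
    pose proof (Rpower_in_01 q (2 * mu + 2 * INR k + 2) Hq ltac:(lra)).
    apply qpoch_inf_in_01; lra. }
  assert (0 <= q ^ (k * (k + 1))) by (apply pow_le; lra).
  assert (0 < (1 - q ^ 2) ^ k) by (apply pow_lt; lra).
  assert (/ qpoch (q ^ 2) (q ^ 2) k <= / (1 - q ^ 2) ^ k)
    by (apply Rinv_le_contravar, pow_le_qpoch; auto).
  assert (0 < / qpoch (q ^ 2) (q ^ 2) k) by (apply Rinv_0_lt_compat; auto).
  unfold qJ_coef, Rdiv.
  rewrite !Rabs_mult, pow_1_abs, Rabs_inv, !Rabs_pos_eq by lra.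
  rewrite Rmult_1_l; apply Rmult_le_compat; nra.
Qed.

Lemma ex_series_gaussian q r : 0 < q < 1 -> 0 < r ->
  ex_series (fun k => q ^ (k * (k + 1)) * r ^ k).
Proof.
  intros Hq Hr; pose proof (sqr_in_01 q Hq) as HQ.
  assert (Hpos : forall n, 0 < q ^ (n * (n + 1)) * r ^ n)
    by (intros; apply Rmult_lt_0_compat; apply pow_lt; lra).
  apply ex_series_Rabs.
  apply (ex_series_DAlembert _ 0); [lra | intros; apply Rgt_not_eq, Hpos |].
  apply (is_lim_seq_ext (fun n => r * q ^ 2 * (q ^ 2) ^ n)).
  - intros n.
    rewrite Rabs_pos_eq by (apply Rlt_le, Rdiv_lt_0_compat; apply Hpos).
    replace (q ^ (S n * (S n + 1))) with (q ^ (n * (n + 1)) * (q ^ 2) ^ S n)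
      by (rewrite <- pow_mult, <- pow_add; f_equal; lia).
    pose proof (Hpos n).
    assert (q ^ (n * (n + 1)) <> 0) by (apply pow_nonzero; lra).
    assert (r ^ n <> 0) by (apply pow_nonzero; lra).
    simpl; field; auto.
  - replace 0 with (r * q ^ 2 * 0) by ring.
    apply (is_lim_seq_scal_l _ (r * q ^ 2) 0), is_lim_seq_geom.
    rewrite Rabs_pos_eq; lra.
Qed.

Lemma ex_series_Rabs_qJ_coef q mu y : 0 < q < 1 -> -1 < mu ->
  ex_series (fun k => Rabs (qJ_coef q mu k * y ^ k)).
Proof.
  intros Hq Hmu; pose proof (sqr_in_01 q Hq) as HQ.
  set (r := Rabs y / (1 - q ^ 2) + 1).
  assert (0 <= Rabs y / (1 - q ^ 2))
    by (apply Rmult_le_pos; [apply Rabs_pos | left; apply Rinv_0_lt_compat; lra]).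
  apply (@ex_series_le R_AbsRing R_CompleteNormedModule _ (fun k => q ^ (k * (k + 1)) * r ^ k));
    [| apply ex_series_gaussian; unfold r; lra].
  intros k; change norm with Rabs; simpl.
  rewrite Rabs_Rabsolu, Rabs_mult, <- RPow_abs.
  eapply Rle_trans; [apply Rmult_le_compat_r; [apply pow_le, Rabs_pos | apply Rabs_qJ_coef_le; auto]|].
  assert (0 < (1 - q ^ 2) ^ k) by (apply pow_lt; lra).
  replace (q ^ (k * (k + 1)) / (1 - q ^ 2) ^ k * Rabs y ^ k)
    with (q ^ (k * (k + 1)) * (Rabs y / (1 - q ^ 2)) ^ k)
    by (unfold Rdiv; rewrite Rpow_mult_distr, pow_inv; field; lra).
  apply Rmult_le_compat_l; [apply pow_le; lra|].
  apply pow_incr; unfold r; lra.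
Qed.

Lemma CV_radius_qJ_coef q mu x : 0 < q < 1 -> -1 < mu ->
  Rbar_lt (Rabs x) (CV_radius (qJ_coef q mu)).
Proof.
  intros Hq Hmu.
  assert (H : Rbar_le (Rabs x + 1) (CV_radius (qJ_coef q mu))).
  { apply (proj1 (Lub_Rbar_correct (CV_disk (qJ_coef q mu)))).
    apply ex_series_Rabs_qJ_coef; auto. }
  destruct (CV_radius (qJ_coef q mu)); simpl in *; auto; lra.
Qed.

Lemma is_derive_qJ_ps q mu y : 0 < q < 1 -> -1 < mu ->
  is_derive (qJ_ps q mu) y (qJ_ps_der q mu y).
Proof. intros; apply is_derive_PSeries, CV_radius_qJ_coef; auto. Qed.

Lemma PSeries_bounded (a : nat -> R) R0 :
  (forall x, Rbar_lt (Rabs x) (CV_radius a)) ->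
  exists M, 0 <= M /\ forall y, Rabs y <= R0 -> Rabs (PSeries a y) <= M.
Proof.
  intros Hr; exists (Series (fun n => Rabs (a n * R0 ^ n))).
  assert (Hex : ex_series (fun n => Rabs (a n * R0 ^ n))) by (apply CV_disk_inside; auto).
  split.
  - assert (H0 : Series (fun _ : nat => 0) = 0).
    { unfold Series; rewrite (Lim_seq_ext _ (fun _ => 0)), Lim_seq_const; auto.
      intros n; rewrite sum_n_const; apply Rmult_0_r. }
    rewrite <- H0; apply Series_le; auto; intros; split; [lra | apply Rabs_pos].
  - intros y Hy; unfold PSeries.
    eapply Rle_trans; [apply Series_Rabs, CV_disk_inside; auto|].
    apply Series_le; auto; intros n; split; [apply Rabs_pos|].
    rewrite !Rabs_mult; apply Rmult_le_compat_l; [apply Rabs_pos|].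
    rewrite <- !RPow_abs; apply pow_incr; split; [apply Rabs_pos|].
    pose proof (Rabs_pos y); rewrite (Rabs_pos_eq R0); lra.
Qed.

Lemma Rpower_2 q : 0 < q -> Rpower q 2 = q ^ 2.
Proof. intros; replace 2 with (INR 2) by (simpl; ring); apply Rpower_pow; auto. Qed.

Lemma Rpower_2_INR q k : 0 < q -> Rpower q (2 * INR k) = (q ^ 2) ^ k.
Proof.
  intros; rewrite <- pow_mult.
  replace (2 * INR k) with (INR (2 * k)) by (rewrite mult_INR; simpl; ring).
  apply Rpower_pow; auto.
Qed.

Lemma Rpower_2nu_2 q nu : 0 < q -> Rpower q (2 * nu + 2) = Rpower (q ^ 2) nu * q ^ 2.
Proof.
  intros; rewrite <- Rpower_2 by auto.
  rewrite Rpower_mult, <- Rpower_plus; f_equal; ring.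
Qed.

Lemma qJ_coef_shift_nu q mu k : 0 < q ->
  qJ_coef q mu k = (1 - Rpower q (2 * mu + 2) * (q ^ 2) ^ k) * qJ_coef q (mu + 1) k.
Proof.
  intros Hq; unfold qJ_coef.
  rewrite (qpoch_inf_shift (Rpower q (2 * mu + 2 * INR k + 2))).
  replace (Rpower q (2 * mu + 2 * INR k + 2) * q ^ 2)
    with (Rpower q (2 * (mu + 1) + 2 * INR k + 2))
    by (rewrite <- Rpower_2, <- Rpower_plus by auto; f_equal; ring).
  replace (Rpower q (2 * mu + 2 * INR k + 2)) with (Rpower q (2 * mu + 2) * (q ^ 2) ^ k)
    by (rewrite <- Rpower_2_INR, <- Rpower_plus by auto; f_equal; ring).
  unfold Rdiv; ring.
Qed.

Lemma qJ_coef_succ q mu i : 0 < q < 1 ->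
  qJ_coef q mu (S i) * (1 - (q ^ 2) ^ S i) = - q ^ 2 * (q ^ 2) ^ i * qJ_coef q (mu + 1) i.
Proof.
  intros Hq; pose proof (sqr_in_01 q Hq) as HQ; unfold qJ_coef.
  replace (q ^ (S i * (S i + 1))) with (q ^ (i * (i + 1)) * (q ^ 2 * (q ^ 2) ^ i))
    by (replace (S i * (S i + 1))%nat with (i * (i + 1) + 2 * S i)%nat by lia;
        rewrite pow_add, (pow_mult q 2); reflexivity).
  replace (2 * mu + 2 * INR (S i) + 2) with (2 * (mu + 1) + 2 * INR i + 2) by (rewrite S_INR; ring).
  change (qpoch (q ^ 2) (q ^ 2) (S i)) with (qpoch (q ^ 2) (q ^ 2) i * (1 - q ^ 2 * (q ^ 2) ^ i)).
  pose proof (qpoch_pos (q ^ 2) i HQ).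
  pose proof (pow_in_01 (q ^ 2) i ltac:(lra)).
  assert (1 - q ^ 2 * (q ^ 2) ^ i <> 0) by nra.
  rewrite <- (tech_pow_Rmult (q ^ 2) i), <- (tech_pow_Rmult (-1) i).
  field; lra.
Qed.

Lemma ex_series_qJ_coef q mu y : 0 < q < 1 -> -1 < mu ->
  ex_series (fun k => qJ_coef q mu k * y ^ k).
Proof. intros; apply ex_series_Rabs, ex_series_Rabs_qJ_coef; auto. Qed.

Lemma qJ_ps_contiguous q mu y : 0 < q < 1 -> -1 < mu ->
  qJ_ps q mu y = qJ_ps q (mu + 1) y - Rpower q (2 * mu + 2) * qJ_ps q (mu + 1) (q ^ 2 * y).
Proof.
  intros Hq Hmu; unfold qJ_ps, PSeries.
  rewrite <- Series_scal_l, <- Series_minus.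
  - apply Series_ext; intros k.
    rewrite qJ_coef_shift_nu, Rpow_mult_distr by lra; ring.
  - apply ex_series_qJ_coef; auto; lra.
  - exact (ex_series_scal_l _ _ (ex_series_qJ_coef q (mu + 1) _ Hq ltac:(lra))).
Qed.

Lemma qJ_ps_qdiff q mu y : 0 < q < 1 -> -1 < mu ->
  qJ_ps q mu y - qJ_ps q mu (q ^ 2 * y) = - q ^ 2 * y * qJ_ps q (mu + 1) (q ^ 2 * y).
Proof.
  intros Hq Hmu; unfold qJ_ps, PSeries.
  rewrite <- Series_minus by (apply ex_series_qJ_coef; auto).
  rewrite Series_incr_1
    by exact (ex_series_minus _ _ (ex_series_qJ_coef q mu y Hq Hmu)
                (ex_series_qJ_coef q mu (q ^ 2 * y) Hq Hmu)).
  rewrite <- Series_scal_l.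
  simpl (y ^ 0); simpl ((q ^ 2 * y) ^ 0); rewrite Rminus_diag, Rplus_0_l.
  apply Series_ext; intros k; rewrite !Rpow_mult_distr.
  replace (qJ_coef q mu (S k) * y ^ S k - qJ_coef q mu (S k) * ((q ^ 2) ^ S k * y ^ S k))
    with (qJ_coef q mu (S k) * (1 - (q ^ 2) ^ S k) * y ^ S k) by ring.
  rewrite qJ_coef_succ by auto; simpl (y ^ S k); ring.
Qed.

Lemma qJ_ps_qdiff_eq q nu y : 0 < q < 1 -> -1 < nu ->
  let F := qJ_ps q nu in let s := Rpower (q ^ 2) nu in
  F y - (1 + s) * F (q ^ 2 * y) + s * F (q ^ 2 * (q ^ 2 * y)) + q ^ 2 * y * F (q ^ 2 * y) = 0.
Proof.
  intros Hq Hnu F s.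
  pose proof (qJ_ps_contiguous q nu (q ^ 2 * y) Hq Hnu) as H1.
  pose proof (qJ_ps_qdiff q nu y Hq Hnu) as H2.
  pose proof (qJ_ps_qdiff q nu (q ^ 2 * y) Hq Hnu) as H3.
  rewrite Rpower_2nu_2 in H1 by lra.
  fold F s in H1, H2, H3 |- *.
  set (h1 := qJ_ps q (nu + 1) (q ^ 2 * y)) in *.
  set (h2 := qJ_ps q (nu + 1) (q ^ 2 * (q ^ 2 * y))) in *.
  replace (F y) with (F (q ^ 2 * y) - q ^ 2 * y * h1) by lra.
  replace (F (q ^ 2 * (q ^ 2 * y))) with (F (q ^ 2 * y) + q ^ 2 * (q ^ 2 * y) * h2) by lra.
  rewrite H1; ring.
Qed.

Section Casorati.

Variables (F : R -> R) (Q s : R).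

Definition casorati (a2 b2 : R) (k : nat) : R :=
  F (a2 * Q ^ k) * F (b2 * Q ^ S k) - F (a2 * Q ^ S k) * F (b2 * Q ^ k).

Definition ortho_term (a2 b2 : R) (k : nat) : R :=
  Q ^ S k * s ^ k * F (a2 * Q ^ S k) * F (b2 * Q ^ S k).

Hypothesis F_qdiff_eq :
  forall y, F y - (1 + s) * F (Q * y) + s * F (Q * (Q * y)) + Q * y * F (Q * y) = 0.

(* q-analogue of Green's identity: the weighted Casorati determinant telescopes. *)
Lemma casorati_step a2 b2 k :
  s ^ k * casorati a2 b2 k - s ^ S k * casorati a2 b2 (S k) = (b2 - a2) * ortho_term a2 b2 k.
Proof.
  unfold casorati, ortho_term.
  pose proof (F_qdiff_eq (a2 * Q ^ k)) as Ea; pose proof (F_qdiff_eq (b2 * Q ^ k)) as Eb.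
  replace (Q * (a2 * Q ^ k)) with (a2 * Q ^ S k) in Ea by (simpl; ring).
  replace (Q * (a2 * Q ^ S k)) with (a2 * Q ^ S (S k)) in Ea by (simpl; ring).
  replace (Q * (b2 * Q ^ k)) with (b2 * Q ^ S k) in Eb by (simpl; ring).
  replace (Q * (b2 * Q ^ S k)) with (b2 * Q ^ S (S k)) in Eb by (simpl; ring).
  set (g0 := F (a2 * Q ^ k)) in *; set (g1 := F (a2 * Q ^ S k)) in *;
    set (g2 := F (a2 * Q ^ S (S k))) in *.
  set (e0 := F (b2 * Q ^ k)) in *; set (e1 := F (b2 * Q ^ S k)) in *;
    set (e2 := F (b2 * Q ^ S (S k))) in *.
  transitivity (s ^ k * (e1 * (g0 - (1 + s) * g1 + s * g2 + a2 * Q ^ S k * g1)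
                      - g1 * (e0 - (1 + s) * e1 + s * e2 + b2 * Q ^ S k * e1))
                + (b2 - a2) * (Q ^ S k * s ^ k * g1 * e1)); [simpl; ring|].
  rewrite Ea, Eb; ring.
Qed.

Lemma sum_ortho_term a2 b2 N :
  (b2 - a2) * sum_n (ortho_term a2 b2) N
  = casorati a2 b2 0 - s ^ S N * casorati a2 b2 (S N).
Proof.
  induction N as [|N IH].
  - rewrite sum_O, <- casorati_step; simpl; ring.
  - rewrite sum_Sn; change plus with Rplus.
    rewrite Rmult_plus_distr_l, IH, <- casorati_step; ring.
Qed.

End Casorati.

Lemma is_derive_Rminus (f g : R -> R) (x df dg : R) :
  is_derive f x df -> is_derive g x dg -> is_derive (fun y => f y - g y) x (df - dg).
Proof. intros; apply (is_derive_minus f g); auto. Qed.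

Lemma is_derive_Rmult (f g : R -> R) (x df dg : R) :
  is_derive f x df -> is_derive g x dg -> is_derive (fun y => f y * g y) x (df * g x + f x * dg).
Proof. intros; apply (is_derive_mult f g); auto; intros; apply Rmult_comm. Qed.

Lemma is_derive_Rcomp (f g : R -> R) (x df dg : R) :
  is_derive f (g x) df -> is_derive g x dg -> is_derive (fun y => f (g y)) x (dg * df).
Proof. intros; apply (is_derive_comp f g); auto. Qed.

Lemma is_derive_Rconst (c x : R) : is_derive (fun _ => c) x 0.
Proof. apply (is_derive_const c). Qed.

Lemma is_derive_Rid (x : R) : is_derive (fun y => y) x 1.
Proof. apply (is_derive_id x). Qed.

Lemma is_derive_eq (f : R -> R) (x l l' : R) : is_derive f x l -> l = l' -> is_derive f x l'.
Proof. intros H <-; exact H. Qed.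

Lemma is_derive_qJ_ps_scaled (q nu c y : R) : 0 < q < 1 -> -1 < nu ->
  is_derive (fun z => qJ_ps q nu (z * c)) y (c * qJ_ps_der q nu (y * c)).
Proof.
  intros Hq Hnu; eapply is_derive_eq.
  - apply (is_derive_Rcomp (qJ_ps q nu) (fun z => z * c)); [apply is_derive_qJ_ps; auto|].
    apply is_derive_Rmult; [apply is_derive_Rid | apply is_derive_Rconst].
  - cbv beta; ring.
Qed.

(* The derivative of [casorati (qJ_ps q nu) (q^2) a2 b2 k] in [a2], at [a2 = b2]. *)
Definition casorati_der (q nu b2 : R) (k : nat) : R :=
  (q ^ 2) ^ k * qJ_ps_der q nu (b2 * (q ^ 2) ^ k) * qJ_ps q nu (b2 * (q ^ 2) ^ S k)
  - (q ^ 2) ^ S k * qJ_ps_der q nu (b2 * (q ^ 2) ^ S k) * qJ_ps q nu (b2 * (q ^ 2) ^ k).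

Lemma is_derive_casorati (q nu b2 : R) (k : nat) : 0 < q < 1 -> -1 < nu ->
  is_derive (fun y => casorati (qJ_ps q nu) (q ^ 2) y b2 k) b2 (casorati_der q nu b2 k).
Proof.
  intros Hq Hnu; unfold casorati, casorati_der; eapply is_derive_eq.
  - apply is_derive_Rminus.
    + apply (is_derive_Rmult (fun y => qJ_ps q nu (y * (q ^ 2) ^ k))
                             (fun _ => qJ_ps q nu (b2 * (q ^ 2) ^ S k)));
        [apply is_derive_qJ_ps_scaled; auto | apply is_derive_Rconst].
    + apply (is_derive_Rmult (fun y => qJ_ps q nu (y * (q ^ 2) ^ S k))
                             (fun _ => qJ_ps q nu (b2 * (q ^ 2) ^ k)));
        [apply is_derive_qJ_ps_scaled; auto | apply is_derive_Rconst].
  - cbv beta; ring.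
Qed.

Lemma ex_derive_sum_ortho_term (q nu s b2 y : R) (N : nat) : 0 < q < 1 -> -1 < nu ->
  ex_derive (fun a2 => sum_n (ortho_term (qJ_ps q nu) (q ^ 2) s a2 b2) N) y.
Proof.
  intros Hq Hnu; apply (ex_derive_sum_n (fun k a2 => ortho_term (qJ_ps q nu) (q ^ 2) s a2 b2 k)).
  intros k _; unfold ortho_term; eexists.
  apply (is_derive_Rmult (fun a2 => (q ^ 2) ^ S k * s ^ k * qJ_ps q nu (a2 * (q ^ 2) ^ S k))
                         (fun _ => qJ_ps q nu (b2 * (q ^ 2) ^ S k))); [|apply is_derive_Rconst].
  apply (is_derive_Rmult (fun _ => (q ^ 2) ^ S k * s ^ k)); [apply is_derive_Rconst|].
  apply is_derive_qJ_ps_scaled; auto.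
Qed.

(* Differentiate the telescoped sum in [a2] at [a2 = b2]: the factor [b2 - a2] vanishes there. *)
Lemma sum_ortho_term_diag (q nu b2 : R) (N : nat) : 0 < q < 1 -> -1 < nu ->
  let s := Rpower (q ^ 2) nu in
  sum_n (ortho_term (qJ_ps q nu) (q ^ 2) s b2 b2) N
  = - casorati_der q nu b2 0 + s ^ S N * casorati_der q nu b2 (S N).
Proof.
  intros Hq Hnu s.
  set (P := fun a2 => sum_n (ortho_term (qJ_ps q nu) (q ^ 2) s a2 b2) N).
  destruct (ex_derive_sum_ortho_term q nu s b2 b2 N Hq Hnu) as [d Hd]; fold P in Hd.
  assert (H1 : is_derive (fun a2 => (b2 - a2) * P a2) b2 (- P b2)).
  { eapply is_derive_eq.
    - apply (is_derive_Rmult (fun a2 => b2 - a2) P); [|exact Hd].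
      apply (is_derive_Rminus (fun _ => b2)); [apply is_derive_Rconst | apply is_derive_Rid].
    - cbv beta; ring. }
  assert (H2 : is_derive (fun a2 => (b2 - a2) * P a2) b2
                 (casorati_der q nu b2 0 - s ^ S N * casorati_der q nu b2 (S N))).
  { eapply is_derive_ext.
    - intros a2; symmetry; apply sum_ortho_term; intros y; apply qJ_ps_qdiff_eq; auto.
    - apply is_derive_Rminus; [|apply is_derive_scal]; apply is_derive_casorati; auto. }
  pose proof (is_derive_unique _ _ _ H1); pose proof (is_derive_unique _ _ _ H2).
  unfold P in *; lra.
Qed.

Lemma is_lim_seq_geom_dominated (u : nat -> R) C r :
  0 <= r < 1 -> (forall N, Rabs (u N) <= C * r ^ N) -> is_lim_seq u 0.
Proof.
  intros Hr Hu.
  pose proof (is_lim_seq_scal_l _ C _ (is_lim_seq_geom r ltac:(rewrite Rabs_pos_eq; lra))) as H1.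
  simpl in H1; rewrite Rmult_0_r in H1.
  pose proof (proj1 (is_lim_seq_opp _ _) H1) as H2; simpl in H2; rewrite Ropp_0 in H2.
  apply (is_lim_seq_le_le (fun N => - (C * r ^ N)) u (fun N => C * r ^ N)); auto.
  intros N; specialize (Hu N); apply Rabs_le_between in Hu; lra.
Qed.

Lemma is_lim_seq_weighted_tail (X : nat -> R) s Q C :
  0 < s -> 0 <= Q -> s * Q < 1 -> (forall k, Rabs (X k) <= C * Q ^ k) ->
  is_lim_seq (fun N => s ^ S N * X (S N)) 0.
Proof.
  intros Hs HQ HsQ HX.
  apply (is_lim_seq_geom_dominated _ (C * (s * Q)) (s * Q)); [nra|].
  intros N; rewrite Rabs_mult, Rabs_pos_eq by (apply pow_le; lra).
  eapply Rle_trans; [apply Rmult_le_compat_l; [apply pow_le; lra | apply HX]|].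
  rewrite Rpow_mult_distr; simpl; lra.
Qed.

Lemma Rpower_q2_nu_bounds q nu : 0 < q < 1 -> -1 < nu ->
  0 < Rpower (q ^ 2) nu /\ Rpower (q ^ 2) nu * q ^ 2 < 1.
Proof.
  intros Hq Hnu; split; [apply exp_pos|].
  rewrite <- Rpower_2nu_2 by lra; apply Rpower_in_01; lra.
Qed.

Lemma qJ_ps_bounded q mu R0 : 0 < q < 1 -> -1 < mu ->
  exists M, 0 <= M /\ forall y, Rabs y <= R0 -> Rabs (qJ_ps q mu y) <= M.
Proof. intros; apply PSeries_bounded; intros; apply CV_radius_qJ_coef; auto. Qed.

Lemma qJ_ps_der_bounded q mu R0 : 0 < q < 1 -> -1 < mu ->
  exists M, 0 <= M /\ forall y, Rabs y <= R0 -> Rabs (qJ_ps_der q mu y) <= M.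
Proof.
  intros; apply PSeries_bounded; intros.
  rewrite CV_radius_derive; apply CV_radius_qJ_coef; auto.
Qed.

Lemma Rabs_scaled_le c x R0 : 0 <= c <= 1 -> 0 <= x <= R0 -> Rabs (x * c) <= R0.
Proof. intros; rewrite Rabs_pos_eq; nra. Qed.

(* By [qJ_ps_qdiff] the determinant carries a factor [(q^2)^k]. *)
Lemma casorati_qJ_ps_bound q nu a2 b2 : 0 < q < 1 -> -1 < nu -> 0 <= a2 -> 0 <= b2 ->
  exists C, forall k, Rabs (casorati (qJ_ps q nu) (q ^ 2) a2 b2 k) <= C * (q ^ 2) ^ k.
Proof.
  intros Hq Hnu Ha Hb; pose proof (sqr_in_01 q Hq) as HQ.
  destruct (qJ_ps_bounded q nu (a2 + b2) Hq Hnu) as [M [HM0 HM]].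
  destruct (qJ_ps_bounded q (nu + 1) (a2 + b2) Hq ltac:(lra)) as [M' [HM0' HM']].
  exists (M * (a2 + b2) * M'); intros k; unfold casorati.
  pose proof (qJ_ps_qdiff q nu (a2 * (q ^ 2) ^ k) Hq Hnu) as Ea.
  pose proof (qJ_ps_qdiff q nu (b2 * (q ^ 2) ^ k) Hq Hnu) as Eb.
  replace (q ^ 2 * (a2 * (q ^ 2) ^ k)) with (a2 * (q ^ 2) ^ S k) in Ea by (simpl; ring).
  replace (q ^ 2 * (b2 * (q ^ 2) ^ k)) with (b2 * (q ^ 2) ^ S k) in Eb by (simpl; ring).
  pose proof (pow_in_01 (q ^ 2) k ltac:(lra)) as Hk.
  pose proof (pow_in_01 (q ^ 2) (S k) ltac:(lra)) as HSk.
  pose proof (HM _ (Rabs_scaled_le _ a2 (a2 + b2) Hk ltac:(lra))) as B1.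
  pose proof (HM _ (Rabs_scaled_le _ b2 (a2 + b2) Hk ltac:(lra))) as B2.
  pose proof (HM' _ (Rabs_scaled_le _ a2 (a2 + b2) HSk ltac:(lra))) as B3.
  pose proof (HM' _ (Rabs_scaled_le _ b2 (a2 + b2) HSk ltac:(lra))) as B4.
  set (g0 := qJ_ps q nu (a2 * (q ^ 2) ^ k)) in *.
  set (g1 := qJ_ps q nu (a2 * (q ^ 2) ^ S k)) in *.
  set (e0 := qJ_ps q nu (b2 * (q ^ 2) ^ k)) in *.
  set (e1 := qJ_ps q nu (b2 * (q ^ 2) ^ S k)) in *.
  set (ha := qJ_ps q (nu + 1) (a2 * (q ^ 2) ^ S k)) in *.
  set (hb := qJ_ps q (nu + 1) (b2 * (q ^ 2) ^ S k)) in *.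
  replace (g0 * e1 - g1 * e0) with ((q ^ 2) ^ S k * (g0 * b2 * hb - e0 * a2 * ha)) by (simpl in *; nra).
  rewrite Rabs_mult, Rabs_pos_eq by lra.
  assert (Rabs (g0 * b2 * hb - e0 * a2 * ha) <= M * (a2 + b2) * M').
  { eapply Rle_trans; [apply Rabs_triang|].
    rewrite Rabs_Ropp, !Rabs_mult, (Rabs_pos_eq a2), (Rabs_pos_eq b2) by lra.
    pose proof (Rabs_pos g0); pose proof (Rabs_pos e0); pose proof (Rabs_pos ha); pose proof (Rabs_pos hb).
    assert (Rabs g0 * b2 * Rabs hb <= M * b2 * M')
      by (apply Rmult_le_compat; try nra; apply Rmult_le_compat_r; lra).
    assert (Rabs e0 * a2 * Rabs ha <= M * a2 * M')
      by (apply Rmult_le_compat; try nra; apply Rmult_le_compat_r; lra).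
    nra. }
  change ((q ^ 2) ^ S k) with (q ^ 2 * (q ^ 2) ^ k).
  assert (0 <= (q ^ 2) ^ k * Rabs (g0 * b2 * hb - e0 * a2 * ha))
    by (apply Rmult_le_pos; [lra | apply Rabs_pos]).
  rewrite (Rmult_comm (M * (a2 + b2) * M')), Rmult_assoc.
  apply (Rle_trans _ ((q ^ 2) ^ k * Rabs (g0 * b2 * hb - e0 * a2 * ha))); nra.
Qed.

Lemma casorati_der_bound q nu b2 : 0 < q < 1 -> -1 < nu -> 0 <= b2 ->
  exists C, forall k, Rabs (casorati_der q nu b2 k) <= C * (q ^ 2) ^ k.
Proof.
  intros Hq Hnu Hb; pose proof (sqr_in_01 q Hq) as HQ.
  destruct (qJ_ps_bounded q nu b2 Hq Hnu) as [M [HM0 HM]].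
  destruct (qJ_ps_der_bounded q nu b2 Hq Hnu) as [M' [HM0' HM']].
  exists (2 * M' * M); intros k; unfold casorati_der.
  pose proof (pow_in_01 (q ^ 2) k ltac:(lra)) as Hk.
  pose proof (pow_in_01 (q ^ 2) (S k) ltac:(lra)) as HSk.
  pose proof (HM _ (Rabs_scaled_le _ b2 b2 Hk ltac:(lra))) as B1.
  pose proof (HM _ (Rabs_scaled_le _ b2 b2 HSk ltac:(lra))) as B2.
  pose proof (HM' _ (Rabs_scaled_le _ b2 b2 Hk ltac:(lra))) as B3.
  pose proof (HM' _ (Rabs_scaled_le _ b2 b2 HSk ltac:(lra))) as B4.
  set (g0 := qJ_ps q nu (b2 * (q ^ 2) ^ k)) in *.
  set (g1 := qJ_ps q nu (b2 * (q ^ 2) ^ S k)) in *.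
  set (d0 := qJ_ps_der q nu (b2 * (q ^ 2) ^ k)) in *.
  set (d1 := qJ_ps_der q nu (b2 * (q ^ 2) ^ S k)) in *.
  replace ((q ^ 2) ^ S k) with (q ^ 2 * (q ^ 2) ^ k) by reflexivity.
  replace ((q ^ 2) ^ k * d0 * g1 - q ^ 2 * (q ^ 2) ^ k * d1 * g0)
    with ((q ^ 2) ^ k * (d0 * g1 - q ^ 2 * d1 * g0)) by ring.
  rewrite Rabs_mult, (Rabs_pos_eq ((q ^ 2) ^ k)) by lra.
  rewrite (Rmult_comm (2 * M' * M)); apply Rmult_le_compat_l; [lra|].
  eapply Rle_trans; [apply Rabs_triang|].
  rewrite Rabs_Ropp, !Rabs_mult, (Rabs_pos_eq (q ^ 2)) by lra.
  pose proof (Rabs_pos g0); pose proof (Rabs_pos g1); pose proof (Rabs_pos d0); pose proof (Rabs_pos d1).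
  assert (Rabs d0 * Rabs g1 <= M' * M) by (apply Rmult_le_compat; lra).
  assert (Rabs d1 * Rabs g0 <= M' * M) by (apply Rmult_le_compat; lra).
  assert (0 <= Rabs d1 * Rabs g0) by (apply Rmult_le_pos; lra).
  assert (q ^ 2 * (Rabs d1 * Rabs g0) <= Rabs d1 * Rabs g0) by nra.
  lra.
Qed.

Lemma is_series_ortho_term_off q nu a2 b2 : 0 < q < 1 -> -1 < nu ->
  0 <= a2 -> 0 <= b2 -> a2 <> b2 ->
  is_series (ortho_term (qJ_ps q nu) (q ^ 2) (Rpower (q ^ 2) nu) a2 b2)
    (casorati (qJ_ps q nu) (q ^ 2) a2 b2 0 / (b2 - a2)).
Proof.
  intros Hq Hnu Ha Hb Hab; pose proof (sqr_in_01 q Hq).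
  destruct (Rpower_q2_nu_bounds q nu Hq Hnu) as [Hs HsQ].
  destruct (casorati_qJ_ps_bound q nu a2 b2 Hq Hnu Ha Hb) as [C HC].
  set (s := Rpower (q ^ 2) nu) in *; set (V := casorati (qJ_ps q nu) (q ^ 2) a2 b2).
  pose proof (is_lim_seq_weighted_tail V s (q ^ 2) C Hs ltac:(lra) HsQ HC) as Htail.
  pose proof (is_lim_seq_minus' (fun _ => V O) _ (V O) 0 (is_lim_seq_const _) Htail) as H0.
  pose proof (is_lim_seq_scal_r _ (/ (b2 - a2)) _ H0) as H1; simpl in H1.
  rewrite Rminus_0_r in H1.
  refine (is_lim_seq_ext _ _ _ _ H1); intros N.
  apply (Rmult_eq_reg_l (b2 - a2)); [|lra].
  rewrite (sum_ortho_term (qJ_ps q nu) (q ^ 2) s (fun y => qJ_ps_qdiff_eq q nu y Hq Hnu)).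
  unfold V; simpl; field; lra.
Qed.

Lemma is_series_ortho_term_diag q nu b2 : 0 < q < 1 -> -1 < nu -> 0 <= b2 ->
  is_series (ortho_term (qJ_ps q nu) (q ^ 2) (Rpower (q ^ 2) nu) b2 b2) (- casorati_der q nu b2 0).
Proof.
  intros Hq Hnu Hb; pose proof (sqr_in_01 q Hq).
  destruct (Rpower_q2_nu_bounds q nu Hq Hnu) as [Hs HsQ].
  destruct (casorati_der_bound q nu b2 Hq Hnu Hb) as [C HC].
  pose proof (is_lim_seq_weighted_tail _ _ (q ^ 2) C Hs ltac:(lra) HsQ HC) as Htail.
  pose proof (is_lim_seq_plus' (fun _ => - casorati_der q nu b2 0) _ _ 0 (is_lim_seq_const _) Htail) as H0.
  rewrite Rplus_0_r in H0.
  exact (is_lim_seq_ext _ _ _ (fun N => eq_sym (sum_ortho_term_diag q nu b2 N Hq Hnu)) H0).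
Qed.

Lemma Rpower_pow_base x y n : 0 < x -> Rpower (x ^ n) y = Rpower x y ^ n.
Proof.
  intros Hx; induction n as [|n IH]; simpl.
  - unfold Rpower; rewrite ln_1, Rmult_0_r; apply exp_0.
  - rewrite <- Rpower_mult_distr, IH by (try apply pow_lt; auto); reflexivity.
Qed.

Lemma Rpower_sqr q nu : 0 < q -> Rpower (q ^ 2) nu = Rpower q nu * Rpower q nu.
Proof. intros; rewrite Rpower_pow_base by auto; simpl; ring. Qed.

Lemma qint_term_qJ_product q nu a b k : 0 < q < 1 -> 0 < a -> 0 < b ->
  (1 - q) * 1 * (1 * q ^ k * qJ q nu (q * b * (1 * q ^ k)) * qJ q nu (q * a * (1 * q ^ k)) * q ^ k)
  = (1 - q) / qpoch_inf (q ^ 2) (q ^ 2) ^ 2 * Rpower a nu * Rpower b nu * Rpower (q ^ 2) nu / q ^ 2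
    * ortho_term (qJ_ps q nu) (q ^ 2) (Rpower (q ^ 2) nu) (a ^ 2) (b ^ 2) k.
Proof.
  intros Hq Ha Hb.
  assert (Hscale : forall c, 0 < c -> Rpower (q * c * (1 * q ^ k)) nu = Rpower c nu * Rpower q nu ^ S k).
  { intros c Hc; replace (q * c * (1 * q ^ k)) with (c * q ^ S k) by (simpl; ring).
    rewrite <- Rpower_mult_distr, Rpower_pow_base by (try apply pow_lt; lra); reflexivity. }
  assert (Hsq : forall c, (q * c * (1 * q ^ k)) ^ 2 = c ^ 2 * (q ^ 2) ^ S k).
  { intros c; rewrite <- !pow_mult; replace (2 * S k)%nat with (S k * 2)%nat by lia.
    rewrite pow_mult; simpl; ring. }
  pose proof (qpoch_inf_pos (q ^ 2) (sqr_in_01 q Hq)).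
  rewrite !qJ_ps_spec, !Hscale, !Hsq by lra; unfold ortho_term.
  rewrite Rpower_sqr, Rpow_mult_distr by lra.
  replace ((q ^ 2) ^ S k) with ((q ^ k) ^ 2 * q ^ 2) by (rewrite <- !pow_mult, <- pow_add; f_equal; lia).
  set (kappa := qpoch_inf (q ^ 2) (q ^ 2)) in *.
  simpl; field; lra.
Qed.

Lemma is_qint_qJ_product q nu a b S : 0 < q < 1 -> 0 < a -> 0 < b ->
  is_series (ortho_term (qJ_ps q nu) (q ^ 2) (Rpower (q ^ 2) nu) (a ^ 2) (b ^ 2)) S ->
  is_qint q (fun x => x * qJ q nu (q * b * x) * qJ q nu (q * a * x)) 1
    ((1 - q) / qpoch_inf (q ^ 2) (q ^ 2) ^ 2 * Rpower a nu * Rpower b nu * Rpower (q ^ 2) nu / q ^ 2 * S).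
Proof.
  intros Hq Ha Hb HS; unfold is_qint.
  eapply is_series_ext; [intros k; symmetry; apply qint_term_qJ_product; auto|].
  apply (is_series_scal_l _ _ _ HS).
Qed.

Lemma qJ_ps_zero_of_qJ_zero q nu b : 0 < q < 1 -> 0 < b ->
  qJ q nu b = 0 -> qJ_ps q nu (b ^ 2) = 0.
Proof.
  intros Hq Hb Hz; rewrite qJ_ps_spec in Hz.
  pose proof (qpoch_inf_pos (q ^ 2) (sqr_in_01 q Hq)).
  assert (0 < Rpower b nu) by apply exp_pos.
  assert (0 < Rpower b nu / qpoch_inf (q ^ 2) (q ^ 2)) by (apply Rdiv_lt_0_compat; auto).
  destruct (Rmult_integral _ _ Hz); [lra | auto].
Qed.

Lemma qJ_ps_at_zero q nu y : 0 < q < 1 -> -1 < nu -> qJ_ps q nu y = 0 ->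
  qJ_ps q nu (q ^ 2 * y) = q ^ 2 * y * qJ_ps q (nu + 1) (q ^ 2 * y)
  /\ qJ_ps q (nu + 1) y = Rpower q nu * Rpower q nu * q ^ 2 * qJ_ps q (nu + 1) (q ^ 2 * y).
Proof.
  intros Hq Hnu Hz.
  pose proof (qJ_ps_qdiff q nu y Hq Hnu) as H1.
  pose proof (qJ_ps_contiguous q nu y Hq Hnu) as H2.
  rewrite Rpower_2nu_2, Rpower_sqr in H2 by lra.
  split; lra.
Qed.

Lemma Derive_qJ q nu b : 0 < q < 1 -> -1 < nu -> 0 < b ->
  Derive (qJ q nu) b
  = (nu * Rpower b (nu - 1) * qJ_ps q nu (b ^ 2) + Rpower b nu * (2 * b * qJ_ps_der q nu (b ^ 2)))
    / qpoch_inf (q ^ 2) (q ^ 2).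
Proof.
  intros Hq Hnu Hb.
  set (kappa := qpoch_inf (q ^ 2) (q ^ 2)).
  rewrite (Derive_ext _ (fun x => Rpower x nu / kappa * qJ_ps q nu (x ^ 2)))
    by (intros; apply qJ_ps_spec).
  apply is_derive_unique; eapply is_derive_eq.
  - apply (is_derive_Rmult (fun x => Rpower x nu / kappa) (fun x => qJ_ps q nu (x ^ 2))).
    + apply (is_derive_Rmult (fun x => Rpower x nu) (fun _ => / kappa)); [|apply is_derive_Rconst].
      apply is_derive_Reals, derivable_pt_lim_power; auto.
    + apply (is_derive_Rcomp (qJ_ps q nu) (fun x => x ^ 2)); [apply is_derive_qJ_ps; auto|].
      apply (is_derive_ext (fun x => x * x)); [intros t; cbv beta; rewrite <- Rsqr_pow2; reflexivity|].
      apply is_derive_Rmult; apply is_derive_Rid.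
  - cbv beta; unfold Rdiv; ring.
Qed.

Lemma is_qint_qJ_orthogonal q nu a b : 0 < q < 1 -> -1 < nu -> 0 < a -> 0 < b -> a <> b ->
  qJ q nu a = 0 -> qJ q nu b = 0 ->
  is_qint q (fun x => x * qJ q nu (q * b * x) * qJ q nu (q * a * x)) 1 0.
Proof.
  intros Hq Hnu Ha Hb Hab Hza Hzb.
  assert (Hab2 : a ^ 2 <> b ^ 2) by (intros E; apply Hab; nra).
  pose proof (is_series_ortho_term_off q nu (a ^ 2) (b ^ 2) Hq Hnu
                ltac:(nra) ltac:(nra) Hab2) as HS.
  unfold casorati in HS; rewrite !pow_O, !Rmult_1_r in HS.
  rewrite !qJ_ps_zero_of_qJ_zero in HS by auto.
  replace ((0 * _ - _ * 0) / (b ^ 2 - a ^ 2)) with 0 in HS by (field; lra).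
  rewrite <- (Rmult_0_r ((1 - q) / qpoch_inf (q ^ 2) (q ^ 2) ^ 2 * Rpower a nu * Rpower b nu
                          * Rpower (q ^ 2) nu / q ^ 2)).
  apply is_qint_qJ_product; auto.
Qed.

Lemma is_qint_qJ_norm q nu b : 0 < q < 1 -> -1 < nu -> 0 < b -> qJ q nu b = 0 ->
  is_qint q (fun x => x * qJ q nu (q * b * x) * qJ q nu (q * b * x)) 1
    (- / 2 * (1 - q) * Rpower q (nu - 1) * qJ q (nu + 1) (q * b) * Derive (qJ q nu) b).
Proof.
  intros Hq Hnu Hb Hz.
  pose proof (qJ_ps_zero_of_qJ_zero q nu b Hq Hb Hz) as HG.
  destruct (qJ_ps_at_zero q nu (b ^ 2) Hq Hnu HG) as [Hshift _].
  pose proof (qpoch_inf_pos (q ^ 2) (sqr_in_01 q Hq)) as Hkappa.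
  pose proof (is_series_ortho_term_diag q nu (b ^ 2) Hq Hnu ltac:(nra)) as HS.
  replace (- / 2 * (1 - q) * Rpower q (nu - 1) * qJ q (nu + 1) (q * b) * Derive (qJ q nu) b)
    with ((1 - q) / qpoch_inf (q ^ 2) (q ^ 2) ^ 2 * Rpower b nu * Rpower b nu
          * Rpower (q ^ 2) nu / q ^ 2 * - casorati_der q nu (b ^ 2) 0).
  { apply is_qint_qJ_product; auto. }
  unfold casorati_der; rewrite !pow_O, pow_1, !Rmult_1_r, HG.
  replace (b ^ 2 * q ^ 2) with (q ^ 2 * b ^ 2) by ring.
  rewrite Hshift, Derive_qJ, HG, qJ_ps_spec, Rpow_mult_distr, Rpower_sqr by lra.
  rewrite <- Rpower_mult_distr, Rpower_plus, Rpower_1 by nra.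
  rewrite (Rpower_plus nu 1 b), Rpower_1 by lra.
  unfold Rminus; rewrite (Rpower_plus nu (- (1)) q), Rpower_Ropp, Rpower_1 by lra.
  field; lra.
Qed.

Lemma qJ_zero_norm_forms q nu b D : 0 < q < 1 -> -1 < nu -> 0 < b -> qJ q nu b = 0 ->
  - / 2 * (1 - q) * Rpower q (nu - 1) * qJ q (nu + 1) (q * b) * D
  = / 2 * (1 - q) ^ 2 * Rpower q (nu - 2) * Dq q (qJ q nu) b * D
  /\ / 2 * (1 - q) ^ 2 * Rpower q (nu - 2) * Dq q (qJ q nu) b * D
  = - / 2 * (1 - q) * Rpower q (nu - 2) * / b * qJ q nu (q * b) * D
  /\ - / 2 * (1 - q) * Rpower q (nu - 2) * / b * qJ q nu (q * b) * D
  = - / 2 * (1 - q) * Rpower q (-2) * qJ q (nu + 1) b * D.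
Proof.
  intros Hq Hnu Hb Hz.
  pose proof (qJ_ps_zero_of_qJ_zero q nu b Hq Hb Hz) as HG.
  destruct (qJ_ps_at_zero q nu (b ^ 2) Hq Hnu HG) as [Hshift Hcontig].
  pose proof (qpoch_inf_pos (q ^ 2) (sqr_in_01 q Hq)) as Hkappa.
  unfold Dq; rewrite Hz.
  rewrite !qJ_ps_spec, !Rpow_mult_distr, Hshift, Hcontig.
  rewrite <- !Rpower_mult_distr, !(Rpower_plus nu 1), !Rpower_1 by lra.
  unfold Rminus; rewrite !(Rpower_plus nu), !Rpower_Ropp, Rpower_1, Rpower_2 by lra.
  replace (-2) with (- (2)) by ring; rewrite Rpower_Ropp, Rpower_2 by lra.
  split; [|split]; field; lra.
Qed.

Lemma strict_mono_neq (j : nat -> R) n m :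
  (forall n, j n < j (S n)) -> n <> m -> j n <> j m.
Proof.
  intros Hj Hnm.
  assert (Hlt : forall n m, (n < m)%nat -> j n < j m).
  { intros n' m' H; induction H as [|k _ IH]; [apply Hj | specialize (Hj k); lra]. }
  destruct (Nat.lt_total n m) as [H | [H | H]]; [| contradiction |];
    apply Hlt in H; lra.
Qed.

Theorem proposition3p5 (q nu : R) (j : nat -> R) :
  0 < q < 1 -> -1 < nu ->
  (forall n, 0 < j n) ->
  (forall n, j n < j (S n)) ->
  (forall n, qJ q nu (j n) = 0) ->
  (forall x, 0 < x -> qJ q nu x = 0 -> exists n, x = j n) ->
  forall n m : nat,
    is_qint q (fun x => x * qJ q nu (q * j n * x) * qJ q nu (q * j m * x)) 1
      (- / 2 * (1 - q) * Rpower q (nu - 1) * qJ q (nu + 1) (q * j n)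
         * Derive (qJ q nu) (j n) * kdelta n m)
    /\ - / 2 * (1 - q) * Rpower q (nu - 1) * qJ q (nu + 1) (q * j n)
         * Derive (qJ q nu) (j n)
       = / 2 * (1 - q) ^ 2 * Rpower q (nu - 2) * Dq q (qJ q nu) (j n)
         * Derive (qJ q nu) (j n)
    /\ / 2 * (1 - q) ^ 2 * Rpower q (nu - 2) * Dq q (qJ q nu) (j n)
         * Derive (qJ q nu) (j n)
       = - / 2 * (1 - q) * Rpower q (nu - 2) * / j n * qJ q nu (q * j n)
         * Derive (qJ q nu) (j n)
    /\ - / 2 * (1 - q) * Rpower q (nu - 2) * / j n * qJ q nu (q * j n)
         * Derive (qJ q nu) (j n)
       = - / 2 * (1 - q) * Rpower q (-2) * qJ q (nu + 1) (j n)
         * Derive (qJ q nu) (j n).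
Proof.
  (* Orthogonality only uses that the [j n] are distinct positive zeros. *)
  intros Hq Hnu Hpos Hmono Hzero _ n m.
  split; [|apply qJ_zero_norm_forms; auto].
  unfold kdelta; destruct (Nat.eqb_spec n m) as [<- | Hnm].
  - rewrite Rmult_1_r; apply is_qint_qJ_norm; auto.
  - rewrite Rmult_0_r; apply is_qint_qJ_orthogonal; auto.
    apply (strict_mono_neq j m n Hmono); auto.
Qed.
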